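(* Let $p$ be a prime, $m\ge0$ an integer, and $r,s,s'$ positive integers with $r\leq \min\{s,s',p^m\}$. (a) (Periodicity) If $s\equiv s'\pmod{p^m}$, then $\varepsilon(r,s,p)=\varepsilon(r,s',p)$. (b) (Duality) If $s'\equiv -s\pmod{p^m}$, then $\varepsilon(r,s',p)$ is the negative reverse of $\varepsilon(r,s,p)$, i.e. if $\varepsilon(r,s,p)=(\varepsilon_1,\dots,\varepsilon_r)$ then $\varepsilon(r,s',p)=(-\varepsilon_r,\dots,-\varepsilon_2,-\varepsilon_1)$.
   Context: For a positive integer $n$, let $J_n$ denote the $n\times n$ matrix with $1$s in positions $(i,i)$ for $1\le i\le n$ and $(i,i+1)$ for $1\le i<n$, and $0$s elsewhere. For $1\le r\le s$ and a field $F$ of characteristic $p$, the Jordan canonical form of $J_r\otimes J_s$ over $F$ is $J_{\lambda_1}\oplus\cdots\oplus J_{\lambda_r}$ with $\lambda_1\ge\cdots\ge\lambda_r>0$; write $\lambda(r,s,p)=(\lambda_1,\dots,\lambda_r)$ (depending only on $r,s,p$). The deviation vector is $\varepsilon(r,s,p)=(\lambda_1-s,\dots,\lambda_r-s)$. *)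

From HB Require Import structures.
From mathcomp Require Import all_boot all_order all_algebra.
From mathcomp Require Import mxtens.
Set Implicit Arguments. Unset Strict Implicit. Unset Printing Implicit Defensive.
Import Order.TTheory GRing.Theory Num.Theory.
Local Open Scope ring_scope.

Definition jordan_block (F : fieldType) (n : nat) : 'M[F]_n :=
  \matrix_(i < n, j < n) (((i == j :> nat) || (j == i.+1 :> nat))%:R : F).

(* Similarity is expressed with a (necessarily square) invertible matrix P,
   i.e. row_free and row_full, with P (J_r (x) J_s) = D P. *)
Definition is_jcf_tens (F : fieldType) (r s : nat) (lam : 'I_r -> nat) : Prop :=
  [/\ (forall i j : 'I_r, (i <= j)%N -> (lam j <= lam i)%N),
      (forall i : 'I_r, (0 < lam i)%N) &
      exists P : 'M[F]_(\sum_(i < r) lam i, r * s),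
        [/\ row_free P, row_full P &
            P *m (jordan_block F r *t jordan_block F s)
            = (\mxdiag_(i < r) jordan_block F (lam i)) *m P]].

Definition deviation (r s : nat) (lam : 'I_r -> nat) (i : 'I_r) : int :=
  (lam i)%:Z - s%:Z.
Arguments deviation : clear implicits.
Arguments is_jcf_tens : clear implicits.

From HB Require Import structures.
From mathcomp Require Import all_boot all_order all_algebra.
From mathcomp Require Import mxtens zify.
Import Order.TTheory GRing.Theory Num.Theory.
Set Implicit Arguments. Unset Strict Implicit. Unset Printing Implicit Defensive.

(* Let X_s = J_r (x) J_s - 1 and q = p^m >= r.  The Jordan type of J_r (x) J_s is
   determined by its rank function k |-> sum_i (lam_i - k) = rank X_s^k.  In
   characteristic p, X_s^q = 1 (x) N_s^q for the nilpotent shift N_s, so the image of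
   X_(q+s)^q is a copy of F^r (x) F^s on which X_(q+s) acts as X_s: this gives
   rank X_(q+s)^(q+k) = rank X_s^k, hence periodicity.  When q | n and n >= 2q the ranks
   of the powers X_n^(qt) are r(n - qt), and convexity of k |-> rank X_n^k forces
   rank X_n^k = r(n - k), i.e. ker X_n^k = im X_n^(n-k).  Splitting F^n, n = s + s',
   into the X_n-stable last s' coordinates and the quotient on the first s coordinates
   then yields rank X_s^(n-k) + r s' = r k + rank X_s'^k, hence duality. *)

Section ShiftMatrix.
Variable R : pzRingType.
Local Open Scope ring_scope.

Definition shiftmx (c m n : nat) : 'M[R]_(m, n) :=
  \matrix_(i, j) ((j == (i + c)%N :> nat)%:R).

Lemma big_ord_delta n x (f : 'I_n -> R) (x_lt_n : (x < n)%N) :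
  \sum_(k < n) ((k == x :> nat)%:R * f k) = f (Ordinal x_lt_n).
Proof.
rewrite (bigD1 (Ordinal x_lt_n)) //= eqxx mul1r big1 ?addr0 // => k.
by rewrite -val_eqE /= => /negbTE->; rewrite mul0r.
Qed.

Lemma mul_shiftmx a b m n l : ((l <= n + b) || (m + a <= n))%N ->
  shiftmx a m n *m shiftmx b n l = shiftmx (a + b) m l.
Proof.
move=> dims; apply/matrixP => i j; rewrite !mxE.
under eq_bigr do rewrite !mxE.
have [ia_lt_n|n_le_ia] := ltnP (i + a) n.
  by rewrite big_ord_delta /= addnA.
rewrite big1 => [|k _]; last first.
  by case: eqP => [k_ia|]; rewrite ?mul0r //; move: (ltn_ord k); lia.
by case: eqP => // j_iab; move: (ltn_ord i) (ltn_ord j) dims; lia.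
Qed.

Lemma shiftmx0 n : shiftmx 0 n n = 1%:M.
Proof. by apply/matrixP => i j; rewrite !mxE addn0 eq_sym. Qed.

Lemma shiftmx_eq0 c m n : (n <= c)%N -> shiftmx c m n = 0.
Proof.
move=> n_le_c; apply/matrixP => i j; rewrite !mxE.
by case: eqP => // j_ic; move: (ltn_ord j); lia.
Qed.

Lemma shiftmx1X n c : shiftmx 1 n n ^+ c = shiftmx c n n.
Proof.
elim: c => [|c IHc]; first by rewrite expr0 shiftmx0.
by rewrite exprSr IHc -mulmxE mul_shiftmx ?leq_addr // addn1.
Qed.

Lemma shiftmx_comm c a b : (b <= c + a)%N ->
  shiftmx c a b *m shiftmx 1 b b = shiftmx 1 a a *m shiftmx c a b.
Proof.
move=> b_le; rewrite mul_shiftmx ?leq_addr // mul_shiftmx ?(addnC a c) ?b_le //.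
by rewrite addnC.
Qed.

Lemma shiftmx_mul_tr c a b : (a + c <= b)%N ->
  shiftmx c a b *m (shiftmx c a b)^T = 1%:M.
Proof.
move=> dims; apply/matrixP => i j; rewrite !mxE.
under eq_bigr do rewrite !mxE.
have ic_lt_b : (i + c < b)%N by move: (ltn_ord i); lia.
by rewrite big_ord_delta /= eqn_add2r.
Qed.

Lemma shiftmx_factor c n : (c <= n)%N ->
  shiftmx c n n = shiftmx 0 n (n - c) *m shiftmx c (n - c) n.
Proof.
by move=> c_le_n; rewrite mul_shiftmx ?add0n // subnK ?leqnn.
Qed.

End ShiftMatrix.
Arguments shiftmx {R}.

Lemma jordan_blockE (F : fieldType) n :
  jordan_block F n = (shiftmx 1 n n + 1%:M)%R.
Proof.
apply/matrixP => i j; rewrite !mxE addn1 -val_eqE /=.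
by case: eqVneq => [->|_]; rewrite ?(ltn_eqF (ltnSn _)) ?addr0 ?add0r // addrC.
Qed.

Section Tensor.
Variable R : comPzRingType.
Local Open Scope ring_scope.

Lemma tensmx11 m n : (1%:M : 'M[R]_m) *t (1%:M : 'M[R]_n) = 1%:M.
Proof.
apply/matrixP => i j.
case: (mxtens_indexP i) => i1 i2; case: (mxtens_indexP j) => j1 j2.
rewrite tensmxE !mxE (can_eq (@mxtens_indexK _ _)) xpair_eqE.
by case: (i1 == j1); case: (i2 == j2); rewrite ?mulr1 ?mulr0 ?mul0r.
Qed.

Lemma tensmxDr m n p q (A : 'M[R]_(m, n)) (B C : 'M[R]_(p, q)) :
  A *t (B + C) = A *t B + A *t C.
Proof. by apply/matrixP => i j; rewrite !mxE mulrDr. Qed.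

Lemma tensmxX m n (A : 'M[R]_m) (B : 'M[R]_n) k :
  (A *t B) ^+ k = A ^+ k *t B ^+ k.
Proof.
elim: k => [|k IHk]; first by rewrite !expr0 tensmx11.
by rewrite !exprSr -!mulmxE IHk tensmx_mul.
Qed.

Lemma mul_tens1mx r m n p (A : 'M[R]_(m, n)) (B : 'M[R]_(n, p)) :
  (1%:M : 'M[R]_r) *t (A *m B) = (1%:M *t A) *m (1%:M *t B).
Proof. by rewrite tensmx_mul mulmx1. Qed.

End Tensor.

Section MatrixRank.
Variable F : fieldType.
Local Open Scope ring_scope.

Lemma row_free_shiftmx c a b :
  (a + c <= b)%N -> row_free (shiftmx c a b : 'M[F]_(a, b)).
Proof.
by move=> dims; apply/row_freeP; exists (shiftmx c a b)^T; apply: shiftmx_mul_tr.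
Qed.

Lemma row_full_shiftmx0 a b :
  (a <= b)%N -> row_full (shiftmx 0 b a : 'M[F]_(b, a)).
Proof.
move=> a_le_b; apply/row_fullP; exists (shiftmx 0 a b).
by rewrite mul_shiftmx ?addn0 ?a_le_b // shiftmx0.
Qed.

Lemma mxrank_shiftmx c n : \rank (shiftmx c n n : 'M[F]_n) = (n - c)%N.
Proof.
have [c_le_n|n_lt_c] := leqP c n; last first.
  by rewrite shiftmx_eq0 ?mxrank0 ?(ltnW n_lt_c); lia.
rewrite shiftmx_factor // (eqmxMfull _ (@row_full_shiftmx0 _ _ (leq_subr c n))).
by apply/eqP; apply: row_free_shiftmx; rewrite subnK.
Qed.

Lemma row_free_tens1mx r m n (A : 'M[F]_(m, n)) :
  row_free A -> row_free ((1%:M : 'M_r) *t A).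
Proof.
case/row_freeP => B AB; apply/row_freeP; exists (1%:M *t B).
by rewrite -mul_tens1mx AB tensmx11.
Qed.

Lemma row_full_tens1mx r m n (A : 'M[F]_(m, n)) :
  row_full A -> row_full ((1%:M : 'M_r) *t A).
Proof.
case/row_fullP => B BA; apply/row_fullP; exists (1%:M *t B).
by rewrite -mul_tens1mx BA tensmx11.
Qed.

Lemma mxrank_tens1mx r m n (A : 'M[F]_(m, n)) :
  \rank ((1%:M : 'M_r) *t A) = (r * \rank A)%N.
Proof.
rewrite -{1}(mulmx_base A) mul_tens1mx.
rewrite (eqmxMfull _ (@row_full_tens1mx r _ _ _ (col_base_full A))).
by rewrite (eqP (@row_free_tens1mx r _ _ _ (row_base_free A))).
Qed.

Lemma mul_mxdiag p (p_ : 'I_p -> nat) (A B : forall i, 'M[F]_(p_ i)) :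
  \mxdiag_i A i *m \mxdiag_i B i = \mxdiag_i (A i *m B i).
Proof.
rewrite {2}/mxdiag mul_mxdiag_mxblock /mxdiag; apply/eq_mxblock => i j.
by case: eqVneq => [<-|_]; rewrite ?mulmx0 // !conform_mx_id.
Qed.

Lemma mxdiagX p (p_ : 'I_p -> nat) (A : forall i, 'M[F]_(p_ i)) k :
  (\mxdiag_i A i) ^+ k = \mxdiag_i (A i ^+ k).
Proof.
elim: k => [|k IHk].
  by rewrite expr0; under eq_mxdiag do rewrite expr0; rewrite mxdiagZ.
by rewrite exprSr IHk -mulmxE mul_mxdiag; apply: eq_mxdiag => i; rewrite exprSr.
Qed.

Lemma mulmx_exp_intertwine m n (P : 'M[F]_(m, n)) A B k :
  P *m A = B *m P -> P *m A ^+ k = B ^+ k *m P.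
Proof.
move=> PA; elim: k => [|k IHk]; first by rewrite !expr0 mulmx1 mul1mx.
by rewrite !exprSr -!mulmxE mulmxA IHk -!mulmxA PA.
Qed.

End MatrixRank.

Section Frobenius.
Variables (F : fieldType) (n : nat).
Local Open Scope ring_scope.

Lemma exprD1p_pchar p (y : 'M[F]_n) :
  p \in [pchar F] -> (y + 1%:M) ^+ p = y ^+ p + 1%:M.
Proof.
move=> pcharFp; have p_gt0 := prime_gt0 (pcharf_prime pcharFp).
rewrite idmxE exprD1n -(big_mkord xpredT (fun i => y ^+ i *+ 'C(p, i))).
rewrite big_nat_recr //=.
rewrite big_ltn // big1_seq => [|i /andP[_]]; last first.
  rewrite mem_index_iota => /(bin_lt_pcharf_0 pcharFp) Cpi.
  by rewrite -scaler_nat Cpi scale0r.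
by rewrite expr0 bin0 binn !mulr1n addr0 addrC.
Qed.

Lemma exprD1n_pchar p m (y : 'M[F]_n) :
  p \in [pchar F] -> (y + 1%:M) ^+ (p ^ m) = y ^+ (p ^ m) + 1%:M.
Proof.
move=> pcharFp; elim: m => [|m IHm]; first by rewrite !expn0 !expr1.
by rewrite expnSr !exprM IHm exprD1p_pchar.
Qed.

End Frobenius.

Lemma sum_ord_const n k : \sum_(i < n) k = n * k.
Proof. by rewrite sum_nat_const card_ord. Qed.

Lemma leq_sum_eq (I : finType) (E1 E2 : I -> nat) :
  (forall i, E1 i <= E2 i) -> \sum_i E1 i = \sum_i E2 i -> E1 =1 E2.
Proof.
move=> leE12 eq_sum i.
have /leqif_sum leqif_sumE : forall j, predT j -> E1 j <= E2 j ?= iff (E1 j == E2 j).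
  by move=> j _; apply/leqif_eq/leE12.
by move: eq_sum => /eqP; rewrite leqif_sumE => /forall_inP/(_ i isT)/eqP.
Qed.

Lemma ltn_sum_pointwise (I : finType) (E1 E2 : I -> nat) i :
  (forall j, E1 j <= E2 j) -> E1 i < E2 i -> \sum_j E1 j < \sum_j E2 j.
Proof.
move=> leE12 ltE12; rewrite ltn_neqAle leq_sum // andbT.
apply: contraTneq ltE12 => eq_sum.
by rewrite (leq_sum_eq leE12 eq_sum) ltnn.
Qed.

Lemma nonincreasing_window_const (d : nat -> nat) c q n :
  {homo d : i j / i <= j >-> j <= i} -> 0 < q -> q + q <= n ->
  \sum_(i < q) d i = q * c -> \sum_(i < q) d (n - q + i) = q * c ->
  forall j, j < n -> d j = c.
Proof.
move=> d_noninc q_gt0 qq_le_n sum_first sum_last j j_lt_n.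
have c_le_last : c <= d (n - q).
  rewrite -(leq_pmul2l q_gt0) -sum_last -sum_ord_const.
  by apply: leq_sum => i _; apply: d_noninc; rewrite leq_addr.
have first_le_c : d q.-1 <= c.
  rewrite -(leq_pmul2l q_gt0) -sum_first -sum_ord_const.
  by apply: leq_sum => i _; apply: d_noninc; move: (ltn_ord i); lia.
have ge_c i : i <= n - q -> c <= d i by move/d_noninc/(leq_trans c_le_last).
have le_c i : q.-1 <= i -> d i <= c by move/d_noninc/leq_trans; apply.
have [j_lt_q|q_le_j] := ltnP j q.
  have first_ge_c (i : 'I_q) : c <= d i by apply: ge_c; move: (ltn_ord i); lia.
  have := leq_sum_eq first_ge_c; rewrite sum_ord_const sum_first.
  by move=> /(_ erefl (Ordinal j_lt_q)).
have [j_le|last_lt_j] := leqP j (n - q).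
  by apply/anti_leq; rewrite le_c ?ge_c //; lia.
have last_le_c (i : 'I_q) : d (n - q + i) <= c by apply: le_c; lia.
have := leq_sum_eq last_le_c; rewrite sum_ord_const sum_last.
have j_last : j - (n - q) < q by lia.
by move=> /(_ erefl (Ordinal j_last)) /=; rewrite subnKC //; lia.
Qed.

Section JordanRank.
Variable r : nat.
Implicit Types x y : 'I_r -> nat.

(* The rank of N^k for a nilpotent N with Jordan blocks of sizes x i. *)
Definition jordan_rank x k := \sum_i (x i - k).

Definition count_gt x k := \sum_i (k < x i).

Lemma jordan_rankS x k : jordan_rank x k = jordan_rank x k.+1 + count_gt x k.
Proof. by rewrite -big_split; apply: eq_bigr => i _ /=; lia. Qed.

Lemma count_gt_lt x y i :
  {homo x : i j / i <= j >-> j <= i} -> {homo y : i j / i <= j >-> j <= i} ->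
  x i < y i -> count_gt x (x i) < count_gt y (x i).
Proof.
move=> x_noninc y_noninc xy_i; apply: (ltn_sum_pointwise (i := i)) => [j|]; last first.
  by rewrite ltnn xy_i.
have [j_le_i|i_lt_j] := leqP j i; last first.
  by rewrite ltnNge x_noninc ?(ltnW i_lt_j).
by rewrite (leq_trans xy_i (y_noninc _ _ j_le_i)) leq_b1.
Qed.

Lemma eq_jordan_rank x y :
  {homo x : i j / i <= j >-> j <= i} -> {homo y : i j / i <= j >-> j <= i} ->
  jordan_rank x =1 jordan_rank y -> x =1 y.
Proof.
move=> x_noninc y_noninc eq_rank.
have eq_count k : count_gt x k = count_gt y k.
  by move: (jordan_rankS x k) (jordan_rankS y k); rewrite -!eq_rank; lia.
move=> i; case: (ltngtP (x i) (y i)) => // [xy_i|yx_i].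
  by have := count_gt_lt x_noninc y_noninc xy_i; rewrite eq_count ltnn.
by have := count_gt_lt y_noninc x_noninc yx_i; rewrite eq_count ltnn.
Qed.

Lemma jordan_rank0 x : jordan_rank x 0 = \sum_i x i.
Proof. by apply: eq_bigr => i _; rewrite subn0. Qed.

Lemma jordan_rank_eq0 x k : (jordan_rank x k == 0) = [forall i, x i <= k].
Proof.
by rewrite sum_nat_eq0; apply: eq_forallb => i; rewrite subn_eq0.
Qed.

Lemma jordan_rank_add_sum x c :
  jordan_rank x c + r * c = \sum_i x i + \sum_i (c - x i).
Proof.
by rewrite -sum_ord_const -!big_split; apply: eq_bigr => i _ /=; lia.
Qed.

Lemma jordan_rank_add_eq x c :
  (jordan_rank x c + r * c == \sum_i x i) = [forall i, c <= x i].
Proof.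
rewrite jordan_rank_add_sum -[X in _ == X]addn0 eqn_add2l sum_nat_eq0.
by apply: eq_forallb => i; rewrite subn_eq0.
Qed.

Lemma jordan_rank_shift x y d :
  {homo x : i j / i <= j >-> j <= i} -> {homo y : i j / i <= j >-> j <= i} ->
  (forall k, jordan_rank y (d + k) = jordan_rank x k) ->
  \sum_i y i = \sum_i x i + r * d ->
  forall i, y i = x i + d.
Proof.
move=> x_noninc y_noninc eq_rank sum_y.
have sum_xd : \sum_i (x i + d) = \sum_i y i by rewrite big_split sum_ord_const.
have y_ge_d : forall i, d <= y i.
  have := eq_rank 0; rewrite addn0 jordan_rank0 => rank_d.
  by apply/forallP; rewrite -jordan_rank_add_eq rank_d sum_y addnC.
apply: eq_jordan_rank => // [i j le_ij|K]; first by rewrite leq_add2r x_noninc.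
have [d_le_K|K_lt_d] := leqP d K.
  by rewrite -(subnKC d_le_K) eq_rank; apply: eq_bigr => i _; lia.
have /eqP rank_y : jordan_rank y K + r * K == \sum_i y i.
  by rewrite jordan_rank_add_eq; apply/forallP => i; apply: leq_trans (ltnW K_lt_d) _.
have /eqP rank_xd : jordan_rank (fun i => x i + d) K + r * K == \sum_i (x i + d).
  rewrite jordan_rank_add_eq; apply/forallP => i.
  exact: leq_trans (ltnW K_lt_d) (leq_addl _ _).
by move: rank_y rank_xd; rewrite sum_xd; lia.
Qed.

Lemma jordan_rank_dual x y a b :
  {homo x : i j / i <= j >-> j <= i} -> {homo y : i j / i <= j >-> j <= i} ->
  \sum_i x i = r * a -> \sum_i y i = r * b ->
  (forall j, j <= a + b ->
     jordan_rank x (a + b - j) + r * b = r * j + jordan_rank y j) ->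
  forall i, y i + x (rev_ord i) = a + b.
Proof.
move=> x_noninc y_noninc sum_x sum_y dual.
have x_le : forall i, x i <= a + b.
  apply/forallP; rewrite -jordan_rank_eq0; have := dual 0 (leq0n _).
  by rewrite subn0 muln0 add0n jordan_rank0 sum_y => rank_x; apply/eqP; lia.
have y_le : forall i, y i <= a + b.
  apply/forallP; rewrite -jordan_rank_eq0; have := dual (a + b) (leqnn _).
  by rewrite subnn jordan_rank0 sum_x mulnDr => rank_y; apply/eqP; lia.
suff eq_y : y =1 (fun i => a + b - x (rev_ord i)) by move=> i; rewrite eq_y subnK.
apply: eq_jordan_rank => // [i j le_ij|K].
  by rewrite leq_sub2l // x_noninc //= leq_sub2l // ltnS.
have [K_le|lt_K] := leqP K (a + b); last first.
  have /eqP -> : jordan_rank y K == 0.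
    by rewrite jordan_rank_eq0; apply/forallP => i; apply: leq_trans (ltnW lt_K).
  apply/esym/eqP; rewrite jordan_rank_eq0; apply/forallP => i; lia.
have := jordan_rank_add_sum x (a + b - K); have := dual K K_le.
have : r * (a + b - K) + r * K = r * a + r * b by rewrite -!mulnDr subnK.
have -> : jordan_rank (fun i => a + b - x (rev_ord i)) K = \sum_i (a + b - K - x i).
  rewrite /jordan_rank (reindex_inj rev_ord_inj) /=.
  by apply: eq_bigr => i _; rewrite rev_ordK; lia.
by rewrite sum_x; lia.
Qed.

End JordanRank.

Section PowerRanks.
Variables (F : fieldType) (N : nat) (A : 'M[F]_N).
Local Open Scope ring_scope.

Lemma mxrank_exp_succ k :
  \rank (A ^+ k) = (\rank (A ^+ k.+1) + \rank (A ^+ k :&: kermx A))%N.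
Proof. by rewrite -(mxrank_mul_ker (A ^+ k) A) mulmxE -exprSr. Qed.

Lemma mxrank_exp_cap_ker_noninc :
  {homo (fun k => \rank (A ^+ k :&: kermx A)) : i j / (i <= j)%N >-> (j <= i)%N}.
Proof.
move=> i j le_ij; apply/mxrankS/capmxS => //.
by rewrite -(subnK le_ij) exprD -mulmxE submxMl.
Qed.

Lemma mxrank_exp_telescope a l :
  \rank (A ^+ a) =
    (\rank (A ^+ (a + l)) + \sum_(i < l) \rank (A ^+ (a + i) :&: kermx A))%N.
Proof.
elim: l => [|l IHl]; first by rewrite addn0 big_ord0 addn0.
rewrite big_ord_recr /= IHl (mxrank_exp_succ (a + l)) addnS -addnA.
by congr (_ + _)%N; apply: addnC.
Qed.

(* The drops rank A^k - rank A^(k+1) = \rank (A^k :&: kermx A) are nonincreasing,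
   and the first and last windows of length q force all of them to equal c. *)
Lemma mxrank_exp_free c q n :
  (0 < q)%N -> (q + q <= n)%N -> N = (c * n)%N ->
  \rank (A ^+ q) = (c * (n - q))%N -> \rank (A ^+ (n - q)) = (c * q)%N ->
  \rank (A ^+ n) = 0%N ->
  forall j, (j <= n)%N -> \rank (A ^+ j) = (c * (n - j))%N.
Proof.
move=> q_gt0 qq_le_n N_cn rank_q rank_nq rank_n.
have ker_const : forall i, (i < n)%N -> \rank (A ^+ i :&: kermx A) = c.
  apply: (nonincreasing_window_const mxrank_exp_cap_ker_noninc q_gt0 qq_le_n).
    have := mxrank_exp_telescope 0 q; rewrite expr0 mxrank1 add0n rank_q.
    under eq_bigr do rewrite add0n.
    by rewrite mulnBr; lia.
  have := mxrank_exp_telescope (n - q) q; rewrite subnK ?rank_nq ?rank_n //; lia.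
move=> j j_le_n; rewrite (mxrank_exp_telescope j (n - j)) subnKC // rank_n add0n.
rewrite (eq_bigr (fun=> c)) => [|i _]; first by rewrite sum_ord_const mulnC.
by apply: ker_const; move: (ltn_ord i); lia.
Qed.

Lemma kermx_exp_free c n k :
  (forall j, (j <= n)%N -> \rank (A ^+ j) = (c * (n - j))%N) -> (k <= n)%N ->
  (kermx (A ^+ k) :=: A ^+ (n - k))%MS.
Proof.
move=> rank_exp k_le_n.
have A_n0 : A ^+ n = 0.
  by apply/eqP; rewrite -mxrank_eq0 rank_exp // subnn muln0.
have im_sub_ker : (A ^+ (n - k) <= kermx (A ^+ k))%MS.
  by apply/sub_kermxP; rewrite mulmxE -exprD subnK.
apply/eqmxP/andP; split => //.
rewrite -(mxrank_leqif_sup im_sub_ker).2 mxrank_ker.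
have := rank_exp 0%N (leq0n n); rewrite expr0 mxrank1 subn0 => N_cn.
rewrite !rank_exp ?leq_subr // subKn //; apply/eqP; nia.
Qed.

End PowerRanks.

Section TensorNilpotent.
Variables (F : fieldType) (r : nat).
Local Open Scope ring_scope.

Definition tens_nil s : 'M[F]_(r * s) :=
  jordan_block F r *t jordan_block F s - 1%:M.

Local Notation X := tens_nil.
Local Notation I1 := (1%:M : 'M[F]_r).

Lemma tens_nil_intertwine c a b k : (b <= c + a)%N ->
  (I1 *t shiftmx c a b) *m X b ^+ k = X a ^+ k *m (I1 *t shiftmx c a b).
Proof.
move=> dims; apply: mulmx_exp_intertwine.
rewrite /tens_nil mulmxBr mulmxBl mulmx1 mul1mx !tensmx_mul mulmx1 mul1mx.
by rewrite !jordan_blockE mulmxDr mulmxDl mulmx1 mul1mx shiftmx_comm.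
Qed.

Lemma tens_nil_exp_pchar p m s : p \in [pchar F] -> (r <= p ^ m)%N ->
  X s ^+ (p ^ m) = I1 *t shiftmx (p ^ m) s s.
Proof.
move=> pcharFp r_le_q.
have := exprD1n_pchar m (X s) pcharFp.
rewrite subrK tensmxX !jordan_blockE.
rewrite !exprD1n_pchar // !shiftmx1X shiftmx_eq0 // add0r tensmxDr tensmx11.
by move/addIr.
Qed.

Lemma mxrank_tens_nil_jcf s lam : is_jcf_tens F r s lam ->
  forall k, \rank (X s ^+ k) = jordan_rank lam k.
Proof.
case=> _ _ [P [P_free P_full P_conj]] k.
set D := \mxdiag_(i < r) jordan_block F (lam i) in P_conj.
have D1 : D - 1%:M = \mxdiag_(i < r) shiftmx 1 (lam i) (lam i).
  rewrite /D; under eq_mxdiag do rewrite jordan_blockE.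
  by rewrite mxdiagD mxdiagZ addrK.
have PX : P *m X s = (D - 1%:M) *m P.
  by rewrite /tens_nil mulmxBr mulmxBl mulmx1 mul1mx P_conj.
rewrite -(eqmxMfull _ P_full) (mulmx_exp_intertwine k PX) mxrankMfree // D1.
by rewrite mxdiagX rank_mxdiag; apply: eq_bigr => i _; rewrite shiftmx1X mxrank_shiftmx.
Qed.

Lemma sum_jcf_tens s lam : is_jcf_tens F r s lam -> (\sum_i lam i = r * s)%N.
Proof.
move/mxrank_tens_nil_jcf/(_ 0%N); rewrite expr0 mxrank1 => ->.
by apply: eq_bigr => i _; rewrite subn0.
Qed.

End TensorNilpotent.

Section TensorNilpotentRanks.
Variables (F : fieldType) (r p m : nat).
Hypotheses (pcharFp : p \in [pchar F]%R) (r_le_q : (r <= p ^ m)%N).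
Local Open Scope ring_scope.
Local Notation q := (p ^ m)%N.
Local Notation X := (tens_nil F r).
Local Notation I1 := (1%:M : 'M[F]_r).

Lemma mxrank_tens_nil_exp_mul s t : \rank (X s ^+ (q * t)) = (r * (s - q * t))%N.
Proof.
rewrite exprM tens_nil_exp_pchar // tensmxX expr1n -shiftmx1X -exprM shiftmx1X.
by rewrite mxrank_tens1mx mxrank_shiftmx.
Qed.

Lemma mxrank_tens_nil_shift s k :
  \rank (X (q + s) ^+ (q + k)) = \rank (X s ^+ k).
Proof.
set E := I1 *t shiftmx q s (q + s).
have E_free : row_free E by apply/row_free_tens1mx/row_free_shiftmx; rewrite addnC.
have im_E : (E :=: X (q + s) ^+ q)%MS.
  have E_factor : E = (I1 *t shiftmx 0 s (q + s)) *m (I1 *t shiftmx q (q + s) (q + s)).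
    by rewrite -mul_tens1mx mul_shiftmx ?leq_addr.
  have Xq_factor : I1 *t shiftmx q (q + s) (q + s) = (I1 *t shiftmx 0 (q + s) s) *m E.
    by rewrite -mul_tens1mx mul_shiftmx ?add0n // addnC leqnn.
  rewrite tens_nil_exp_pchar //; apply/eqmxP/andP; split.
    by rewrite E_factor submxMl.
  by rewrite Xq_factor submxMl.
rewrite exprD -mulmxE -(eqmxMr _ im_E) tens_nil_intertwine //.
exact: mxrankMfree.
Qed.

Lemma mxrank_tens_nil_periodic t s k :
  \rank (X (q * t + s) ^+ (q * t + k)) = \rank (X s ^+ k).
Proof.
elim: t => [|t IHt]; first by rewrite muln0.
by rewrite mulnS -!addnA mxrank_tens_nil_shift.
Qed.

Lemma mxrank_tens_nil_free n : (q %| n)%N -> (q + q <= n)%N ->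
  forall j, (j <= n)%N -> \rank (X n ^+ j) = (r * (n - j))%N.
Proof.
move=> q_dvd_n qq_le_n.
have q_gt0 : (0 < q)%N by rewrite expn_gt0 prime_gt0 ?(pcharf_prime pcharFp).
apply: (mxrank_exp_free q_gt0 qq_le_n erefl).
- by rewrite -[q in X n ^+ q]muln1 mxrank_tens_nil_exp_mul muln1.
- have nq : (n - q = q * (n %/ q).-1)%N by rewrite mulnC -subn1 mulnBl mul1n divnK.
  by rewrite nq mxrank_tens_nil_exp_mul -nq subKn //; lia.
- have := mxrank_tens_nil_exp_mul n (n %/ q).
  by rewrite [(q * _)%N]mulnC divnK // subnn muln0.
Qed.

Lemma mxrank_tens_nil_dual_free s s' k :
  (q %| s + s')%N -> (q + q <= s + s')%N -> (k <= s + s')%N ->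
  (\rank (X s ^+ (s + s' - k)) + r * s' = r * k + \rank (X s' ^+ k))%N.
Proof.
set n := (s + s')%N => q_dvd_n qq_le_n k_le_n.
have rank_n := mxrank_tens_nil_free q_dvd_n qq_le_n.
have ker_n := kermx_exp_free rank_n k_le_n.
set E := I1 *t shiftmx s s' n.
have E_free : row_free E by apply/row_free_tens1mx/row_free_shiftmx; rewrite addnC.
set T := I1 *t shiftmx 0 n s.
have T_full : row_full T by apply/row_full_tens1mx/row_full_shiftmx0/leq_addr.
have ker_T : (kermx T :=: E)%MS.
  have ET0 : E *m T = 0.
    rewrite -mul_tens1mx mul_shiftmx; last by rewrite addn0 leq_addr.
    by rewrite shiftmx_eq0 ?tensmx0 // addn0.
  have E_sub : (E <= kermx T)%MS by apply/sub_kermxP.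
  apply/eqmxP/andP; split => //.
  rewrite -(mxrank_leqif_sup E_sub).2 mxrank_ker (eqP E_free) (eqP T_full).
  by rewrite /n mulnDr addKn.
have := mxrank_mul_ker (X n ^+ (n - k)) T.
rewrite -tens_nil_intertwine ?leq_addr // (eqmxMfull _ T_full).
rewrite (cap_eqmx (eqmx_refl _) ker_T).
have := mxrank_mul_ker E (X n ^+ k).
rewrite tens_nil_intertwine ?leqnn // (mxrankMfree _ E_free) (eqP E_free).
rewrite (cap_eqmx (eqmx_refl _) ker_n) capmxC rank_n ?leq_subr // subKn //.
lia.
Qed.

Lemma mxrank_tens_nil_dual s s' j :
  (q %| s + s')%N -> (0 < s + s')%N -> (j <= s + s')%N ->
  (\rank (X s ^+ (s + s' - j)) + r * s' = r * j + \rank (X s' ^+ j))%N.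
Proof.
move=> q_dvd pos j_le; have q_le := dvdn_leq pos q_dvd.
have := @mxrank_tens_nil_dual_free s (q + s') (q + j).
rewrite mxrank_tens_nil_shift addnCA dvdn_addr ?dvdnn // => /(_ q_dvd).
rewrite subnDl mulnDr mulnDr; lia.
Qed.

End TensorNilpotentRanks.

Section JordanTypes.
Variables (F : fieldType) (r p m : nat).
Hypotheses (pcharFp : p \in [pchar F]%R) (r_le_q : r <= p ^ m).
Local Notation q := (p ^ m).

Lemma jcf_tens_shift s t lam lam' :
  is_jcf_tens F r s lam -> is_jcf_tens F r (q * t + s) lam' ->
  forall i, lam' i = lam i + q * t.
Proof.
move=> jcf jcf'; case: (jcf) => noninc _ _; case: (jcf') => noninc' _ _.
apply: jordan_rank_shift => // [k|].
  rewrite -(mxrank_tens_nil_jcf jcf) -(mxrank_tens_nil_jcf jcf').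
  by rewrite (mxrank_tens_nil_periodic pcharFp r_le_q).
by rewrite (sum_jcf_tens jcf) (sum_jcf_tens jcf') mulnDr addnC.
Qed.

Lemma jcf_tens_periodic s s' lam lam' : s = s' %[mod q] ->
  is_jcf_tens F r s lam -> is_jcf_tens F r s' lam' ->
  forall i, lam' i + s = lam i + s'.
Proof.
wlog le_ss' : s s' lam lam' / s <= s'.
  move=> base s_eq jcf jcf' i; have [le_ss'|lt_s's] := leqP s s'; first exact: base.
  by apply/esym/(base s' s lam' lam); rewrite ?(ltnW lt_s's).
move=> s_eq jcf jcf' i.
have q_dvd : q %| s' - s by rewrite -eqn_mod_dvd // s_eq.
have s'_eq : s' = q * ((s' - s) %/ q) + s by rewrite mulnC divnK ?subnK.
rewrite s'_eq in jcf' *; rewrite (jcf_tens_shift jcf jcf'); lia.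
Qed.

Lemma jcf_tens_dual s s' lam lam' : q %| s + s' -> 0 < s + s' ->
  is_jcf_tens F r s lam -> is_jcf_tens F r s' lam' ->
  forall i, lam' i + lam (rev_ord i) = s + s'.
Proof.
move=> q_dvd pos jcf jcf'; case: (jcf) => noninc _ _; case: (jcf') => noninc' _ _.
apply: jordan_rank_dual (sum_jcf_tens jcf) (sum_jcf_tens jcf') _ => // j j_le.
rewrite -(mxrank_tens_nil_jcf jcf) -(mxrank_tens_nil_jcf jcf').
by rewrite (mxrank_tens_nil_dual pcharFp r_le_q q_dvd pos j_le).
Qed.

End JordanTypes.

Local Open Scope ring_scope.

Theorem theorem4 (p m r s s' : nat) (F : fieldType) :
  prime p -> p \in [pchar F] ->
  (0 < r)%N -> (0 < s)%N -> (0 < s')%N ->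
  (r <= s)%N -> (r <= s')%N -> (r <= p ^ m)%N ->
  forall (lam lam' : 'I_r -> nat),
    is_jcf_tens F r s lam -> is_jcf_tens F r s' lam' ->
    ((s == s' %[mod p ^ m])%N ->
       forall i : 'I_r, deviation r s' lam' i = deviation r s lam i)
    /\
    ((s' + s == 0 %[mod p ^ m])%N ->
       forall i : 'I_r, deviation r s' lam' i = - deviation r s lam (rev_ord i)).
Proof.
move=> _ pcharFp _ s_gt0 _ _ _ r_le_q lam lam' jcf jcf'.
split=> [/eqP s_eq | s'_s_eq0] i; rewrite /deviation.
  by have := jcf_tens_periodic pcharFp r_le_q s_eq jcf jcf' i; lia.
have q_dvd : (p ^ m %| s + s')%N by move: s'_s_eq0; rewrite mod0n addnC.
have := jcf_tens_dual pcharFp r_le_q q_dvd (ltn_addr _ s_gt0) jcf jcf' i; lia.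
Qed.
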